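(* Consider the oceanic model with threshold $h$ under the Shapley scheme. Let $\Pi$ be a partition of all players into winning pools such that every atomic player $i$ is in a pool whose other members are non-atomic players of total mass $k_i$ with $0<k_i\le h$ and $a_i+k_i\ge h$, and all remaining non-atomic players are in pools containing no atomic player, each of total mass exactly $l$, where $l\ge h$ (there being at least one such pool). Then $\Pi$ is a Nash equilibrium if and only if for all distinct atomic players $i,j$: \[\frac{h-a_i}{k_i^2}=\frac{1}{l},\qquad \frac{k_i+a_i-h}{k_i}\ge\frac{a_i}{l},\qquad \frac{k_i+a_i-h}{k_i}\ge\frac{(h-a_j)^2-(\max(0,h-a_i-a_j))^2+(\max(0,a_i-h+k_j))^2}{2k_j^2}.\]
   Context: Oceanic model: there is a finite set $N_a=\{1,\dots,n\}$ of atomic players, player $i$ having stake $a_i>0$, and a continuum $N_s$ of non-atomic players of total mass $L\ge 0$ (a measurable set of non-atomic players contributes stake equal to its Lebesgue measure). A threshold $h>0$ is fixed and $a_i<h$ for every atomic player. Each player either opens her own pool or joins one; pools partition all players. For a pool $S$ let $m(S)$ be the non-atomic mass in $S$ plus the atomic stakes in $S$; its reward is $\rho(S)=1$ if $m(S)\ge h$ (winning) and $0$ otherwise. A partition $\Pi$ into winning pools is a Nash equilibrium if no atomic player can strictly increase her payment by moving to another pool of $\Pi$ or opening a new pool alone, and no non-atomic player can strictly increase her reward per unit of stake by moving to another pool of $\Pi$ (a non-atomic player is infinitesimal, so her move does not change the per-unit reward of the pool she joins). Shapley scheme (oceanic): in a pool $S$ with non-atomic mass $k>0$ and atomic members with stakes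 $b_1,\dots,b_t$, let $L_1,\dots,L_t$ be i.i.d. uniform on $[0,k]$ and $P(i)=\{j\ne i: L_j<L_i\}$; atomic member $i$ receives $\Pr\big[\sum_{j\in P(i)}b_j+L_i<h\le\sum_{j\in P(i)}b_j+L_i+b_i\big]$, and the remaining reward is shared equally per unit of stake among the non-atomic members. *)

From HB Require Import structures.
From mathcomp Require Import all_boot all_order all_algebra.
From mathcomp Require Import all_classical all_reals all_analysis.
Set Implicit Arguments. Unset Strict Implicit. Unset Printing Implicit Defensive.
Import Order.TTheory GRing.Theory Num.Theory.
Import numFieldNormedType.Exports.
Local Open Scope classical_set_scope.
Local Open Scope ring_scope.

(* A partition Pi of all players into pools is described by a finite type P of
   pool labels, the pool sigma i of each atomic player i, and the non-atomic
   mass mu p (Lebesgue measure of the set of non-atomic players) of each pool p. *)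

Section Oceanic.
Variable R : realType.
Variable n : nat.
Variables (a : 'I_n -> R) (h : R).

Definition stake (A : {set 'I_n}) : R := \sum_(j in A) a j.

Definition reward (A : {set 'I_n}) (k : R) : R :=
  if h <= k + stake A then 1 else 0.

(* Shapley payment of atomic member i of a pool with atomic members A (i \in A)
   and non-atomic mass k:
     Pr[ sum_{j in P(i)} a_j + L_i < h <= sum_{j in P(i)} a_j + L_i + a_i ],
   L_j i.i.d. uniform on [0,k], P(i) = {j in A, j <> i : L_j < L_i}.
   Written as L_i = k*u with u uniform on [0,1]; conditionally on L_i = k*u,
   the events {L_j < L_i} (j in A\{i}) are independent of probability u, so
   P(i) = S with probability u^|S| (1-u)^(|A\{i}|-|S|). *)
Definition shapley_pay (A : {set 'I_n}) (k : R) (i : 'I_n) : R :=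
  \int[lebesgue_measure]_(u in `[0%R, 1%R])
    (\sum_(S in powerset (A :\ i))
       u ^+ #|S| * (1 - u) ^+ (#|A :\ i| - #|S|)%N *
       (if (stake S + k * u < h) && (h <= stake S + k * u + a i) then 1 else 0)).

Variables (P : finType) (sigma : 'I_n -> P) (mu : P -> R).

Definition members (p : P) : {set 'I_n} := [set i | sigma i == p].

(* (sigma, mu) is a partition of all players (atomic players and a
   continuum of total mass L) into nonempty pools *)
Definition is_partition (L : R) : Prop :=
  (forall p, 0 <= mu p) /\ \sum_(p : P) mu p = L /\
  (forall p, (exists i, sigma i = p) \/ 0 < mu p).

Definition winning (p : P) : Prop := h <= mu p + stake (members p).

Definition cur_pay (i : 'I_n) : R := shapley_pay (members (sigma i)) (mu (sigma i)) i.

Definition per_unit (p : P) : R :=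
  (reward (members p) (mu p) - \sum_(i in members p) shapley_pay (members p) (mu p) i)
  / mu p.

Definition is_NE : Prop :=
  (forall p, winning p) /\
  (forall i : 'I_n,
     (forall q, q != sigma i ->
        shapley_pay (i |: members q) (mu q) i <= cur_pay i) /\
     shapley_pay [set i] 0 i <= cur_pay i) /\
  (* a non-atomic player of pool p (which requires mu p > 0) moving to q *)
  (forall p q, p != q -> 0 < mu p -> per_unit q <= per_unit p).

End Oceanic.

(* The Shapley payment of an atomic player i in a pool of non-atomic mass k is an
   integral over the normalized arrival time u of i: conditionally on u, every other
   atomic member arrived before i with probability u, and i is pivotal after a
   coalition of stake s exactly when (h - s - a i) / k <= u < (h - s) / k.  In the
   pools that occur here i has at most one atomic partner, so each payment is the
   integral of an affine function of u over a subinterval of [0, 1]: alone, i earns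
   min(1, h/k) - max(0, (h - a i)/k); joining the lone atomic player j, she earns
   the right-hand side of the third condition.  Every pool is winning and opening a
   new pool pays nothing, so the equilibrium conditions reduce to: non-atomic
   players earn the same per unit of stake everywhere, i.e. (h - a i)/k i^2 = 1/l,
   and no atomic player gains by joining another pool. *)

From HB Require Import structures.
From mathcomp Require Import all_boot all_order all_algebra.
From mathcomp Require Import all_classical all_reals all_analysis.
From mathcomp Require Import ring lra.
Import Order.TTheory GRing.Theory Num.Theory.
Import numFieldNormedType.Exports.

Local Open Scope classical_set_scope.
Local Open Scope ring_scope.

Section masked_integrals.
Context {R : realType}.
Local Notation mu := (@lebesgue_measure R).
Implicit Types (f : R -> R) (al be c d x y : R).

Lemma continuous_affine al be : continuous (fun u : R => al + be * u).
Proof.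
move=> u; apply: continuousD; first exact: cvg_cst.
by apply: continuousM; [exact: cvg_cst | exact: cvg_id].
Qed.

Lemma continuous_integrable_itv c d {f} : continuous f ->
  mu.-integrable `[c, d] (EFin \o f).
Proof.
move=> cf; apply: continuous_compact_integrable; first exact: segment_compact.
exact: continuous_subspaceT.
Qed.

Lemma Rintegral_itv_affine al be c d : c <= d ->
  \int[mu]_(u in `[c, d]) (al + be * u) =
  al * (d - c) + be * (d ^+ 2 - c ^+ 2) / 2.
Proof.
rewrite le_eqVlt => /predU1P[<- | cd].
  by rewrite set_itv1 Rintegral_set1; ring.
pose F : {poly R} := al *: 'X + (be / 2) *: 'X^2.
have F' : F^`() = al%:P + be *: 'X.
  rewrite /F !(derivD, derivZ, derivX, derivXn) /= alg_polyC expr1.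
  by rewrite -scalerMnr scalerMnl -mulr_natr divfK // pnatr_eq0.
rewrite /Rintegral (@continuous_FTC2 _ _ (horner F)) //.
- by rewrite /= /F !hornerE /=; field.
- exact/continuous_subspaceT/continuous_affine.
- split; [by move=> u _; exact: derivable_horner
         | exact/cvg_at_right_filter/continuous_horner
         | exact/cvg_at_left_filter/continuous_horner].
- by move=> u _; rewrite -derivE F' !hornerE.
Qed.

Lemma if_itv_patchE f x y u :
  (if (x <= u) && (u < y) then f u else 0) = (f \_ `[x, y[) u.
Proof. by rewrite /patch mem_setE in_itv. Qed.

Lemma integrable01_masked f x y : continuous f ->
  mu.-integrable `[0, 1]
    (EFin \o (fun u => if (x <= u) && (u < y) then f u else 0)).
Proof.
move=> cf; rewrite (_ : (fun u => _) = f \_ `[x, y[); last first.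
  by apply/funext => u; exact: if_itv_patchE.
rewrite -restrict_EFin; apply/integrable_restrict => //.
by apply: integrableS (continuous_integrable_itv 0 1 cf) => //; exact: measurableI.
Qed.

Lemma Rintegral01_masked f x y : continuous f ->
  \int[mu]_(u in `[0, 1]) (if (x <= u) && (u < y) then f u else 0) =
  \int[mu]_(u in `[Num.max 0 x, Num.min 1 y]) f u.
Proof.
move=> cf; under eq_Rintegral do rewrite if_itv_patchE.
rewrite -Rintegral_mkcondr.
have [y1 | y1] := lerP y 1.
- rewrite -Rintegral_itv_bndo_bndc; last first.
    apply: integrableS (continuous_integrable_itv (Num.max 0 x) y cf) => //.
    by apply: subset_itvl; rewrite bnd_simp.
  congr Rintegral; apply/seteqP; split => u /=; rewrite !in_itv /= ge_max.
    by case=> /andP[-> _] /andP[-> ->].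
  by case/andP => /andP[-> ->] uy; rewrite (le_trans (ltW uy) y1) uy.
- congr Rintegral; apply/seteqP; split => u /=; rewrite !in_itv /= ge_max.
    by case=> /andP[-> ->] /andP[-> _].
  by case/andP => /andP[-> ->] u1; rewrite u1 (le_lt_trans u1 y1).
Qed.

End masked_integrals.

Section shapley_small_pools.
Variables (R : realType) (n : nat) (a : 'I_n -> R) (h : R).
Local Notation mu := (@lebesgue_measure R).

Lemma stake_set0 : stake a finset.set0 = 0.
Proof. by rewrite /stake big_set0. Qed.

Lemma stake_set1 j : stake a [set j] = a j.
Proof. by rewrite /stake big_set1. Qed.

Lemma pivotal_itvE (s b k u : R) : 0 < k ->
  (s + k * u < h) && (h <= s + k * u + b) =
  ((h - s - b) / k <= u) && (u < (h - s) / k).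
Proof.
move=> k0; rewrite ler_pdivrMr // ltr_pdivlMr // andbC [u * k]mulrC.
by congr andb; apply/idP/idP => ?; lra.
Qed.

Lemma shapley_pay_alone k i : 0 < k -> 0 <= a i -> 0 <= h -> h <= a i + k ->
  shapley_pay a h [set i] k i = Num.min 1 (h / k) - Num.max 0 ((h - a i) / k).
Proof.
move=> k0 ai0 h0 hak.
have -> : shapley_pay a h [set i] k i = \int[mu]_(u in `[0, 1])
    (if ((h - a i) / k <= u) && (u < h / k) then 1 + 0 * u else 0).
  rewrite /shapley_pay finset.setDv powerset0; apply: eq_Rintegral => u _.
  rewrite big_set1 cards0 stake_set0 pivotal_itvE // !subr0 !expr0 !mul1r.
  by rewrite mul0r addr0.
rewrite Rintegral01_masked; last exact: continuous_affine.
rewrite (Rintegral_itv_affine 1 0); first ring.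
rewrite ge_max !le_min ler01 divr_ge0 ?(ltW k0) //= ler_pdivrMr // mul1r.
by rewrite ler_pM2r ?invr_gt0 // gerBl ai0 andbT; lra.
Qed.

Lemma shapley_pay_alone_massless i : a i < h -> shapley_pay a h [set i] 0 i = 0.
Proof.
move=> aih; rewrite /shapley_pay finset.setDv powerset0.
under eq_Rintegral do
  rewrite big_set1 stake_set0 mul0r !add0r (leNgt h) aih andbF mulr0.
by rewrite Rintegral_cst // mul0r.
Qed.

Lemma shapley_pay_pair k i j : i != j -> 0 < k -> k <= h -> h <= a j + k ->
  0 <= a i <= h -> 0 <= a j <= h ->
  shapley_pay a h (i |: [set j]) k i =
  ((h - a j) ^+ 2 - (Num.max 0 (h - a i - a j)) ^+ 2
    + (Num.max 0 (a i - h + k)) ^+ 2) / (2 * k ^+ 2).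
Proof.
move=> ij k0 kh hajk /andP[ai0 aih] /andP[aj0 ajh].
have -> : shapley_pay a h (i |: [set j]) k i = \int[mu]_(u in `[0, 1])
    ((if ((h - a i) / k <= u) && (u < h / k) then 1 + (-1) * u else 0) +
     (if ((h - a j - a i) / k <= u) && (u < (h - a j) / k) then 0 + 1 * u else 0)).
  rewrite /shapley_pay setU1K ?finset.in_set1 // powerset1.
  apply: eq_Rintegral => u _.
  rewrite big_setU1 /=; last by rewrite finset.in_set1 eq_sym -card_gt0 cards1.
  rewrite big_set1 cards0 cards1 stake_set0 stake_set1 subn0 subnn !pivotal_itvE // !subr0.
  by case: ifP; case: ifP => _ _; ring.
rewrite RintegralD //; try exact/integrable01_masked/continuous_affine.
rewrite !Rintegral01_masked; try exact: continuous_affine.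
have k_neq0 : k != 0 by rewrite gt_eqF.
have -> : Num.min 1 (h / k) = 1 by apply/min_l; rewrite ler_pdivlMr // mul1r.
have -> : Num.max 0 ((h - a i) / k) = (h - a i) / k.
  by apply/max_r/divr_ge0; lra.
have -> : Num.min 1 ((h - a j) / k) = (h - a j) / k.
  by apply/min_r; rewrite ler_pdivrMr // mul1r; lra.
have -> : Num.max 0 ((h - a j - a i) / k) = Num.max 0 (h - a i - a j) / k.
  by rewrite maxr_pMl ?invr_ge0 ?ltW // mul0r [_ - a i]addrAC.
rewrite (Rintegral_itv_affine 0 1); last first.
  by rewrite ler_pM2r ?invr_gt0 // ge_max; apply/andP; split; lra.
have [hk | hk] := lerP (h - a i) k.
- rewrite (Rintegral_itv_affine 1 (-1)); last by rewrite ler_pdivrMr // mul1r.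
  have -> : Num.max 0 (a i - h + k) = a i - h + k by apply/max_r; lra.
  by field.
- rewrite set_itv_ge ?Rintegral_set0; last first.
    by rewrite bnd_simp -ltNge ltr_pdivlMr // mul1r.
  have -> : Num.max 0 (a i - h + k) = 0 by apply/max_l; lra.
  by field.
Qed.

End shapley_small_pools.

Section lone_atomic_players.
Context {R : realType} {n : nat} {a : 'I_n -> R} {h : R}.
Context {P : finType} {sigma : 'I_n -> P} {mu : P -> R} {k : 'I_n -> R} {l : R}.
Hypothesis h_gt0 : 0 < h.
Hypothesis a_range : forall i, 0 < a i /\ a i < h.
Hypothesis sigma_inj : injective sigma.
Hypothesis mu_sigma :
  forall i, mu (sigma i) = k i /\ 0 < k i /\ k i <= h /\ h <= a i + k i.
Hypothesis mu_free : forall p, (forall i, sigma i != p) -> mu p = l.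
Hypothesis free_pool : exists p, forall i, sigma i != p.
Hypothesis h_le_l : h <= l.

Lemma members_sigma i : members sigma (sigma i) = [set i]%SET.
Proof. by apply/setP => j; rewrite !inE (inj_eq sigma_inj). Qed.

Lemma members_free p : (forall i, sigma i != p) -> members sigma p = finset.set0.
Proof. by move=> free; apply/setP => j; rewrite !inE (negbTE (free j)). Qed.

Lemma pool_cases p : (exists i, sigma i = p) \/ (forall i, sigma i != p).
Proof.
have [|none] := pselect (exists i, sigma i = p); first by left.
by right => i; apply/eqP => E; apply: none; exists i.
Qed.

Lemma cur_payE i : cur_pay a h sigma mu i = (k i + a i - h) / k i.
Proof.
have [mui [ki0 [kih hak]]] := mu_sigma i; have [ai0 aih] := a_range i.
rewrite /cur_pay members_sigma mui shapley_pay_alone ?(ltW ai0) //; last lra.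
have -> : Num.min 1 (h / k i) = 1 by apply/min_l; rewrite ler_pdivlMr // mul1r.
by rewrite max_r; [field; lra | apply: divr_ge0; lra].
Qed.

Lemma pay_join_free i p : (forall i, sigma i != p) ->
  shapley_pay a h (i |: members sigma p) (mu p) i = a i / l.
Proof.
move=> free; have [ai0 aih] := a_range i; have l0 : 0 < l := lt_le_trans h_gt0 h_le_l.
have hal : h <= a i + l := ler_wpDl (ltW ai0) h_le_l.
rewrite members_free // finset.setU0 mu_free //.
rewrite shapley_pay_alone ?(ltW ai0) ?(ltW h_gt0) //.
have -> : Num.min 1 (h / l) = h / l by apply/min_r; rewrite ler_pdivrMr // mul1r.
by rewrite max_r; [field; rewrite gt_eqF | apply: divr_ge0; rewrite ?subr_ge0 ltW].
Qed.

Lemma pay_join_sigma i j : i != j ->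
  shapley_pay a h (i |: members sigma (sigma j)) (mu (sigma j)) i =
  ((h - a j) ^+ 2 - (Num.max 0 (h - a i - a j)) ^+ 2
    + (Num.max 0 (a i - h + k j)) ^+ 2) / (2 * k j ^+ 2).
Proof.
move=> ij; have [muj [kj0 [kjh hak]]] := mu_sigma j.
have [ai0 aih] := a_range i; have [aj0 ajh] := a_range j.
by rewrite members_sigma muj shapley_pay_pair //; apply/andP; split; apply: ltW.
Qed.

Lemma pool_winning p : winning a h sigma mu p.
Proof.
rewrite /winning; have [[i <-] | free] := pool_cases p.
  by have [-> [_ [_ hak]]] := mu_sigma i; rewrite members_sigma stake_set1 addrC.
by rewrite members_free // stake_set0 addr0 mu_free.
Qed.

Lemma per_unit_sigma i : per_unit a h sigma mu (sigma i) = (h - a i) / k i ^+ 2.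
Proof.
have [mui [ki0 [kih hak]]] := mu_sigma i.
have := cur_payE i; rewrite /cur_pay /per_unit members_sigma big_set1 => ->.
rewrite /reward stake_set1 mui ifT; last by rewrite addrC.
by field; rewrite gt_eqF.
Qed.

Lemma per_unit_free p : (forall i, sigma i != p) -> per_unit a h sigma mu p = 1 / l.
Proof.
move=> free; rewrite /per_unit members_free // /reward stake_set0 big_set0.
by rewrite addr0 mu_free // h_le_l subr0.
Qed.

Lemma nonatomic_stable_iff :
  (forall p q, p != q -> 0 < mu p ->
     per_unit a h sigma mu q <= per_unit a h sigma mu p) <->
  (forall i, (h - a i) / k i ^+ 2 = 1 / l).
Proof.
split => [stable i | equal p q _ _].
  have [p0 free0] := free_pool; have [mui [ki0 _]] := mu_sigma i.
  have l0 : 0 < l := lt_le_trans h_gt0 h_le_l.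
  rewrite -per_unit_sigma -(per_unit_free p0 free0); apply/eqP; rewrite eq_le.
  by apply/andP; split; apply: stable; rewrite ?mui ?mu_free // ?(eq_sym p0) free0.
have per_unit_const r : per_unit a h sigma mu r = 1 / l.
  have [[i <-] | free] := pool_cases r; last exact: per_unit_free.
  by rewrite per_unit_sigma equal.
by rewrite !per_unit_const.
Qed.

Lemma atomic_move_stable_iff :
  (forall i q, q != sigma i ->
     shapley_pay a h (i |: members sigma q) (mu q) i <= cur_pay a h sigma mu i) <->
  (forall i, a i / l <= (k i + a i - h) / k i) /\
  (forall i j, i != j ->
     ((h - a j) ^+ 2 - (Num.max 0 (h - a i - a j)) ^+ 2
       + (Num.max 0 (a i - h + k j)) ^+ 2) / (2 * k j ^+ 2) <= (k i + a i - h) / k i).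
Proof.
split => [stable | [join_free join_sigma] i q qi].
  have [p0 free0] := free_pool; split => [i | i j ij].
    by rewrite -cur_payE -(pay_join_free i p0 free0); apply: stable; rewrite eq_sym.
  rewrite -cur_payE -pay_join_sigma //; apply: stable.
  by rewrite (inj_eq sigma_inj) eq_sym.
rewrite cur_payE; have [[j Ej] | free] := pool_cases q; last by rewrite pay_join_free.
have ij : i != j by apply: contraNneq qi => ->; rewrite Ej.
by rewrite -Ej pay_join_sigma //; apply: join_sigma ij.
Qed.

Lemma open_alone_stable i : shapley_pay a h [set i] 0 i <= cur_pay a h sigma mu i.
Proof.
have [_ aih] := a_range i; have [_ [ki0 [_ hak]]] := mu_sigma i.
rewrite shapley_pay_alone_massless // cur_payE.
by apply: divr_ge0; [rewrite subr_ge0 addrC | exact: ltW].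
Qed.

End lone_atomic_players.

Theorem lemma3p5 (R : realType) (n : nat) (a : 'I_n -> R) (h L : R)
  (P : finType) (sigma : 'I_n -> P) (mu : P -> R) (k : 'I_n -> R) (l : R) :
  0 < h ->
  (forall i, 0 < a i /\ a i < h) ->
  0 <= L ->
  is_partition sigma mu L ->
  (* each atomic player is the only atomic member of her pool, whose
     non-atomic mass is k i *)
  injective sigma ->
  (forall i, mu (sigma i) = k i /\ 0 < k i /\ k i <= h /\ h <= a i + k i) ->
  (* all other pools contain only non-atomic players, of mass exactly l *)
  (forall p, (forall i, sigma i != p) -> mu p = l) ->
  (exists p, forall i, sigma i != p) ->
  h <= l ->
  (is_NE a h sigma mu <->
   (forall i, (h - a i) / (k i ^+ 2) = 1 / l /\
              (k i + a i - h) / k i >= a i / l) /\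
   (forall i j, i != j ->
      (k i + a i - h) / k i >=
      ((h - a j) ^+ 2 - (Num.max 0 (h - a i - a j)) ^+ 2
        + (Num.max 0 (a i - h + k j)) ^+ 2) / (2 * k j ^+ 2))).
Proof.
move=> h0 a_rng _ _ inj mu_sig mu_fr free hl.
have nonatomic := nonatomic_stable_iff h0 a_rng inj mu_sig mu_fr free hl.
have atomic := atomic_move_stable_iff h0 a_rng inj mu_sig mu_fr free hl.
split.
- case=> _ [moves /nonatomic equal].
  have [join_free join_sigma] := atomic.1 (fun i => (moves i).1).
  split=> [i | //]; split; [exact: equal | exact: join_free].
- case=> conds join_sigma.
  have moves := atomic.2 (conj (fun i => (conds i).2) join_sigma).
  split; first exact: pool_winning inj mu_sig mu_fr hl.
  split; last by apply/nonatomic => i; exact: (conds i).1.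
  move=> i; split; [exact: moves | exact (open_alone_stable a_rng inj mu_sig i)].
Qed.
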